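(* Let $q$ be a prime power, $e\ge2$, $r_1,\dots,r_{e-1},m>1$ integers, $n=r_{e-1}\cdots r_1m$, and $k$ an integer with $1<k\le m$. Put $N_1=m$ and $N_i=r_{i-1}\cdots r_1m$ for $2\le i\le e$ (so $N_e=n$). Let $\mathcal{C}_1\subseteq\mathcal{G}_q(m,k)$ be a union of finitely many pairwise distinct orbits under $\mathbb{F}_{q^m}^*$. For each $i=2,\dots,e$ let $\Phi_{i,1},\dots,\Phi_{i,s_i}:\mathbb{F}_{q^{N_{i-1}}}\to\mathbb{F}_{q^{N_i}}$ be injective $\mathbb{F}_q$-linear maps such that the subspaces $V_{i,h}=\Phi_{i,h}(\mathbb{F}_{q^{N_{i-1}}})$ have pairwise distinct orbits under $\mathbb{F}_{q^{N_i}}^*$, and let $\mathcal{C}_i=\bigcup_{h=1}^{s_i}\mathrm{Orb}_{\mathbb{F}_{q^{N_i}}^*}(V_{i,h})\subseteq\mathcal{G}_q(N_i,N_{i-1})$ be full-length. Define recursively $\mathcal{D}_1=\mathcal{C}_1$ and, for $2\le i\le e$, $$\mathcal{D}_i=\mathcal{C}_i\odot\mathcal{D}_{i-1}=\{\beta\,\Phi_{i,h}(U):\ \beta\in\mathbb{F}_{q^{N_i}}^*,\ 1\le h\le s_i,\ U\in\mathcal{D}_{i-1}\}\subseteq\mathcal{G}_q(N_i,k).$$ Assume $d(\mathcal{C}_1)=2k-2$ and $d(\mathcal{C}_i)=2N_{i-1}-2$ for every $i=2,\dots,e$. Then $\mathcal{C}:=\mathcal{D}_e=\mathcal{C}_e\odot\cdots\odot\mathcal{C}_1\subseteq\mathcal{G}_q(n,k)$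 is a multi-orbit cyclic subspace code with minimum distance $2k-2$ and $|\mathcal{C}|=\prod_{i=1}^e|\mathcal{C}_i|$.
   Context: For positive integers $k\le N$, $\mathcal{G}_q(N,k)$ is the set of $k$-dimensional $\mathbb{F}_q$-subspaces of $\mathbb{F}_{q^N}$. Subspace distance $d(U,V)=\dim_{\mathbb{F}_q}(U+V)-\dim_{\mathbb{F}_q}(U\cap V)$; $d(\mathcal{C})=\min\{d(U,V):U,V\in\mathcal{C},U\ne V\}$. For $V\in\mathcal{G}_q(N,k)$, $\mathrm{Orb}_{\mathbb{F}_{q^N}^*}(V)=\{\beta V:\beta\in\mathbb{F}_{q^N}^*\}$; a multi-orbit cyclic subspace code is a union of such orbits. A one-orbit code $\mathrm{Orb}_{\mathbb{F}_{q^N}^*}(V)$ is full-length if $\{\beta\in\mathbb{F}_{q^N}^*:\beta V=V\}=\mathbb{F}_q^*$; a union of orbits is full-length if each orbit is. *)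

From HB Require Import structures.
From mathcomp Require Import all_boot all_order all_algebra all_field.
From mathcomp Require Import finmap.
Set Implicit Arguments. Unset Strict Implicit. Unset Printing Implicit Defensive.
Import GRing.Theory.
Local Open Scope ring_scope.
Local Open Scope fset_scope.

(* F plays the role of F_q (q = #|F|); a field extension L of F with
   \dim {:L} = N plays the role of F_{q^N}; F_q-subspaces of F_{q^N} are
   {vspace L}; beta * V is the product space (<[beta]> * V)%VS. *)

Section Defs.
Variable F : finFieldType.

Definition orb (L : fieldExtType F) (V : {vspace L}) : {fset {vspace L}} :=
  seq_fset tt [seq ((<[(b : L)]> * V)%VS) | b <- enum [pred x : finvect_type L | x != 0]].

Definition sdist (L : fieldExtType F) (U V : {vspace L}) : nat :=
  (\dim (U + V) - \dim (U :&: V))%N.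

Definition min_dist (L : fieldExtType F) (C : {fset {vspace L}}) (d : nat) : Prop :=
  (exists U V, [/\ U \in C, V \in C, U != V & sdist U V = d]) /\
  (forall U V, U \in C -> V \in C -> U != V -> (d <= sdist U V)%N).

(* the one-orbit code Orb(V) is full-length: stabilizer of V is F_q^* *)
Definition full_length (L : fieldExtType F) (V : {vspace L}) : Prop :=
  forall b : L, b != 0 -> ((<[b]> * V)%VS == V) = (b \in 1%VS).

Definition orbits_union (L : fieldExtType F) (s : nat) (V : nat -> {vspace L})
  : {fset {vspace L}} := \bigcup_(h <- iota 0 s) orb (V h).

Definition odot (L L' : fieldExtType F) (s : nat) (Phi : nat -> 'Hom(L, L'))
  (D : {fset {vspace L}}) : {fset {vspace L'}} :=
  \bigcup_(h <- iota 0 s) \bigcup_(U <- D) orb (Phi h @: U)%VS.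

Definition multi_orbit_cyclic (L : fieldExtType F) (C : {fset {vspace L}}) : Prop :=
  exists Vs : seq {vspace L}, C = \bigcup_(V <- Vs) orb V.

(* L : nat -> fields, with L i standing for F_{q^{N_i}} (1 <= i <= e);
   Phi i h : L i -> L (i+1) stands for Phi_{i+1,h+1}, h < s i.
   D i stands for D_{i+1}. *)
Fixpoint Dcode (L : nat -> fieldExtType F) (s : nat -> nat)
  (Phi : forall i, nat -> 'Hom(L i, L i.+1)) (C1 : {fset {vspace L 1%N}}) (i : nat)
  : {fset {vspace L i.+1}} :=
  match i with
  | 0 => C1
  | j.+1 => odot (s j.+1) (Phi j.+1) (Dcode s Phi C1 j)
  end.
End Defs.

From HB Require Import structures.
From mathcomp Require Import all_boot all_order all_algebra all_field.
From mathcomp Require Import finmap zify.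
Set Implicit Arguments. Unset Strict Implicit. Unset Printing Implicit Defensive.
Import GRing.Theory.
Local Open Scope ring_scope.
Local Open Scope fset_scope.

(* A codeword b Phi_h(U) of C ⊙ D lies in the codeword b Phi_h(K) of C.  As
   d(C) = 2 dim K - 2, distinct codewords of C meet in dimension at most 1, whereas
   codewords of C ⊙ D have dimension k >= 2; so equal codewords of C ⊙ D lie in the same
   codeword of C, full length turns b'/b into a scalar of F_q, and then h = h' and U = U'.
   Hence b Phi_h(U) |-> (b Phi_h(K), U) is a well-defined bijection C ⊙ D -> C x D.  Two
   codewords in the same codeword of C are at the distance of their preimages in D
   (translations and injective maps are isometries); two codewords in different codewords
   of C meet in dimension at most 1, so their distance is >= 2k - 2.  Induction along the
   tower of extensions gives the theorem. *)

Lemma card_imfset_kernel (I W Y : choiceType) (f : I -> W) (g : I -> Y) (A : {fset I}) :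
  {in A &, forall a a', (f a == f a') = (g a == g a')} ->
  #|` f @` A| = #|` g @` A|.
Proof.
elim/fset1U_rect: A => [|a A a_notin_A IHA] ker; first by rewrite !imfset0.
have kerA : {in A &, forall x y, (f x == f y) = (g x == g y)}.
  by move=> x y xA yA; apply: ker; rewrite fset1Ur.
have mem_img : (f a \in f @` A) = (g a \in g @` A).
  apply/imfsetP/imfsetP => -[x xA /eqP eq_ax]; exists x => //; apply/eqP.
    by rewrite -ker ?fset1U1 ?fset1Ur.
  by rewrite ker ?fset1U1 ?fset1Ur.
by rewrite !imfsetU1 !cardfsU1 mem_img IHA.
Qed.

Lemma card_fsetM (K K' : choiceType) (A : {fset K}) (B : {fset K'}) :
  #|` A `*` B| = (#|` A| * #|` B|)%N.
Proof.
rewrite /fsetM unlock size_seq_fset undup_id ?size_allpairs //.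
apply: allpairs_uniq; rewrite ?fset_uniq //.
by move=> [? ?] [? ?] _ _ [-> ->].
Qed.

Lemma card_imfset2_kernel (I J W Y : choiceType) (S : I -> W) (T : I -> J -> Y)
    (A : {fset I}) (B : {fset J}) :
  {in A &, forall a a', {in B &, forall u u',
    (T a u == T a' u') = (S a == S a') && (u == u')}} ->
  #|` [fset T a u | a in A, u in B]| = (#|` S @` A| * #|` B|)%N.
Proof.
move=> ker.
have -> : [fset T a u | a in A, u in B] = (fun p => T p.1 p.2) @` (A `*` B).
  apply/fsetP => y; apply/imfset2P/imfsetP => [[a aA [u uB ->]]|[[a u]]].
    by exists (a, u); rewrite // in_fsetM aA.
  by rewrite in_fsetM => /andP[aA uB] ->; exists a => //; exists u.
have -> : (#|` S @` A| * #|` B|)%N = #|` (fun p => (S p.1, p.2)) @` (A `*` B)|.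
  rewrite -(card_fsetM (S @` A) B); congr #|` _|.
  apply/fsetP => -[w u]; rewrite in_fsetM /=.
  apply/andP/imfsetP => [[/imfsetP[a aA ->] uB]|[[a u'] /= + [-> ->]]].
    by exists (a, u); rewrite // in_fsetM aA.
  by rewrite in_fsetM => /andP[aA ->]; rewrite in_imfset.
apply: card_imfset_kernel => -[a u] [a' u']; rewrite !in_fsetM /=.
by move=> /andP[aA uB] /andP[aA' uB']; rewrite ker // xpair_eqE.
Qed.

Section CyclicSubspaceCodes.
Variable F : finFieldType.

Section OneSpace.
Variable L : fieldExtType F.
Implicit Types X Y : {vspace L}.

Lemma sdist_sumE X Y : sdist X Y = (2 * \dim (X + Y) - \dim X - \dim Y)%N.
Proof. by rewrite /sdist; have := dimv_sum_cap X Y; lia. Qed.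

Lemma leq_sdist_cap1 n X Y : \dim X = n -> \dim Y = n ->
  (2 * n - 2 <= sdist X Y)%N = (\dim (X :&: Y) <= 1)%N.
Proof.
move=> dimX dimY; have := dimv_sum_cap X Y; have := dimvS (capvSl X Y).
by rewrite /sdist dimX dimY => ? ?; apply/idP/idP; lia.
Qed.

End OneSpace.

Section InjectiveImage.
Variables (K L : fieldExtType F) (f : 'Hom(K, L)).
Hypothesis f_inj : injective f.
Implicit Types X Y : {vspace K}.

Let ker_f : lker f == 0%VS. Proof. exact/lker0P. Qed.

Lemma dim_limg_inj X : \dim (f @: X) = \dim X.
Proof. by apply: limg_dim_eq; rewrite (eqP ker_f) capv0. Qed.

Lemma sdist_limg_inj X Y : sdist (f @: X) (f @: Y) = sdist X Y.
Proof. by rewrite !sdist_sumE -limgD !dim_limg_inj. Qed.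

Lemma limg_inj X Y : (f @: X)%VS = (f @: Y)%VS -> X = Y.
Proof. by move=> eq_fXY; apply/eqP; rewrite -(eq_limg_ker0 _ _ ker_f) eq_fXY. Qed.

End InjectiveImage.

Section Translation.
Variable L : fieldExtType F.
Implicit Types (b c : L) (X Y V : {vspace L}).

Lemma lmulvE b X : (<[b]> * X)%VS = (amulr b @: X)%VS.
Proof. by rewrite limg_amulr prodvC. Qed.

Lemma amulr_injective b : b != 0 -> injective (amulr b).
Proof. by move=> nz_b; apply/lker0P/lker0_amulr; rewrite unitfE. Qed.

Lemma dim_lmulv b X : b != 0 -> \dim (<[b]> * X) = \dim X.
Proof. by move=> nz_b; rewrite lmulvE (dim_limg_inj (amulr_injective nz_b)). Qed.

Lemma sdist_lmulv b X Y : b != 0 -> sdist (<[b]> * X) (<[b]> * Y) = sdist X Y.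
Proof. by move=> nz_b; rewrite !lmulvE (sdist_limg_inj (amulr_injective nz_b)). Qed.

Lemma lmulv_inj b X Y : b != 0 -> (<[b]> * X = <[b]> * Y)%VS -> X = Y.
Proof. by move=> nz_b; rewrite !lmulvE; apply/limg_inj/amulr_injective. Qed.

Lemma lmulvA b c X : (<[b]> * (<[c]> * X) = <[b * c]> * X)%VS.
Proof. by rewrite prodvA prodv_line. Qed.

Lemma full_length_lmulv_eq V b b' : full_length V -> b != 0 -> b' != 0 ->
  (<[b]> * V = <[b']> * V)%VS -> forall X, (<[b]> * X = <[b']> * X)%VS.
Proof.
move=> flV nz_b nz_b' eq_bV X; set c := b^-1 * b'.
have nz_c : c != 0 by rewrite mulf_neq0 ?invr_eq0.
have c_stab : (<[c]> * V)%VS = V by rewrite -lmulvA -eq_bV lmulvA mulVf // prod1v.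
have c1 : <[c]>%VS = 1%VS.
  by apply/eqP; rewrite eqEdim -memvE -(flV c nz_c) c_stab eqxx dimv1 dim_vline nz_c.
by rewrite -[b'](mulVKf nz_b) -/c -lmulvA c1 prod1v.
Qed.

End Translation.

Section Orbits.
Variable L : fieldExtType F.
Implicit Types (b : L) (X V : {vspace L}).

Lemma orbP X V : reflect (exists2 b, b != 0 & X = (<[b]> * V)%VS) (X \in orb V).
Proof.
rewrite /orb seq_fsetE; apply: (iffP mapP) => -[b].
  by rewrite (@mem_enum (finvect_type L)) => nz_b ->; exists b.
by exists b; rewrite ?(@mem_enum (finvect_type L)).
Qed.

Lemma orb_lmulv b V : b != 0 -> orb (<[b]> * V) = orb V.
Proof.
move=> nz_b; apply/fsetP => X; apply/orbP/orbP => -[c nz_c ->].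
  by exists (c * b); rewrite ?mulf_neq0 ?lmulvA.
by exists (c / b); rewrite ?mulf_neq0 ?invr_eq0 // lmulvA mulfVK.
Qed.

Lemma orbits_unionP s (V : nat -> {vspace L}) X :
  reflect (exists2 h, (h < s)%N & exists2 b, b != 0 & X = (<[b]> * V h)%VS)
          (X \in orbits_union s V).
Proof.
apply: (iffP (bigfcupP _ _ _ _)) => -[h]; rewrite ?mem_iota ?andbT => hs.
  by move/orbP; exists h.
by exists h; [rewrite mem_iota hs | apply/orbP].
Qed.

Lemma dim_orbits_union n s (V : nat -> {vspace L}) :
  (forall h, (h < s)%N -> \dim (V h) = n) ->
  {in orbits_union s V, forall X, \dim X = n}.
Proof. by move=> dimV X /orbits_unionP[h hs [b nz_b ->]]; rewrite dim_lmulv ?dimV. Qed.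

Lemma orbits_union_cyclic s (V : nat -> {vspace L}) :
  multi_orbit_cyclic (orbits_union s V).
Proof. by exists (map V (iota 0 s)); rewrite big_map. Qed.

Definition nonzero : {fset L} :=
  [fset b in [seq (b : L) | b <- enum [pred x : finvect_type L | x != 0]]].

Lemma in_nonzero b : (b \in nonzero) = (b != 0).
Proof. by rewrite in_fset map_id (@mem_enum (finvect_type L)). Qed.

Definition orbit_index s := nonzero `*` [fset h in iota 0 s].

Lemma in_orbit_index s a : (a \in orbit_index s) = (a.1 != 0) && (a.2 < s)%N.
Proof. by rewrite in_fsetM in_nonzero in_fset mem_iota. Qed.

Lemma orbits_unionE s (V : nat -> {vspace L}) :
  orbits_union s V = [fset (<[a.1]> * V a.2)%VS | a in orbit_index s].
Proof.
apply/fsetP => X; apply/orbits_unionP/imfsetP => [[h hs [b nz_b ->]]|[[b h]]].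
  by exists (b, h); rewrite ?in_orbit_index /= ?nz_b.
by rewrite in_orbit_index => /andP[nz_b hs] ->; exists h => //; exists b.
Qed.

End Orbits.

Section Odot.
Variables (K L : fieldExtType F) (s : nat) (Phi : nat -> 'Hom(K, L)).
Implicit Types (D : {fset {vspace K}}) (X : {vspace L}).

Lemma odotP D X :
  reflect (exists2 h, (h < s)%N & exists2 U, U \in D &
             exists2 b, b != 0 & X = (<[b]> * (Phi h @: U))%VS)
          (X \in odot s Phi D).
Proof.
apply: (iffP (bigfcupP _ _ _ _)) => -[h]; rewrite ?mem_iota ?andbT => hs.
  by case/bigfcupP => U /andP[UD _] /orbP; exists h => //; exists U.
case=> U UD /orbP XU; exists h; rewrite ?mem_iota ?hs //.
by apply/bigfcupP; exists U; rewrite ?UD.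
Qed.

Lemma odotE D :
  odot s Phi D = [fset (<[a.1]> * (Phi a.2 @: U))%VS | a in orbit_index L s, U in D].
Proof.
apply/fsetP => X; apply/odotP/imfset2P => [[h hs [U UD [b nz_b ->]]]|[[b h]]].
  by exists (b, h); rewrite ?in_orbit_index /= ?nz_b //; exists U.
by rewrite in_orbit_index => /andP[nz_b hs] [U UD ->]; exists h => //; exists U => //; exists b.
Qed.

Lemma odot_cyclic D : multi_orbit_cyclic (odot s Phi D).
Proof.
exists [seq (Phi h @: U)%VS | h <- iota 0 s, U <- D].
by rewrite big_allpairs_dep.
Qed.

Definition odot_admissible :=
  [/\ forall h, (h < s)%N -> injective (Phi h),
      forall h h', (h < s)%N -> (h' < s)%N -> h != h' ->
        orb (Phi h @: fullv)%VS != orb (Phi h' @: fullv)%VS,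
      forall h, (h < s)%N -> full_length (Phi h @: fullv)%VS
    & min_dist (orbits_union s (fun h => Phi h @: fullv)%VS) (2 * \dim {: K} - 2)].

Section OdotCode.
Let V h := (Phi h @: fullv)%VS.
Hypothesis Phi_inj : forall h, (h < s)%N -> injective (Phi h).
Hypothesis orbV_neq : forall h h', (h < s)%N -> (h' < s)%N -> h != h' ->
  orb (V h) != orb (V h').
Hypothesis V_full_length : forall h, (h < s)%N -> full_length (V h).
Hypothesis dist_C : min_dist (orbits_union s V) (2 * \dim {: K} - 2).
Variables (k : nat) (D : {fset {vspace K}}).
Hypothesis k_gt1 : (1 < k)%N.
Hypothesis dim_D : forall U, U \in D -> \dim U = k.
Hypothesis dist_D : min_dist D (2 * k - 2).

Lemma dimV h : (h < s)%N -> \dim (V h) = \dim {: K}.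
Proof. by move=> hs; rewrite /V (dim_limg_inj (Phi_inj hs)). Qed.

Lemma dim_lmulvV_cap_le1 h h' b b' : (h < s)%N -> (h' < s)%N -> b != 0 -> b' != 0 ->
  (<[b]> * V h)%VS != (<[b']> * V h')%VS ->
  (\dim ((<[b]> * V h) :&: (<[b']> * V h')) <= 1)%N.
Proof.
move=> hs hs' nz_b nz_b' neq.
have C_bVh : (<[b]> * V h)%VS \in orbits_union s V.
  by apply/orbits_unionP; exists h => //; exists b.
have C_bVh' : (<[b']> * V h')%VS \in orbits_union s V.
  by apply/orbits_unionP; exists h' => //; exists b'.
rewrite -(leq_sdist_cap1 (n := \dim {: K})) ?dim_lmulv ?dimV //.
exact: dist_C.2.
Qed.

Lemma lmulvV_eq h h' b b' : (h < s)%N -> (h' < s)%N -> b != 0 -> b' != 0 ->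
  (<[b]> * V h)%VS = (<[b']> * V h')%VS ->
  h = h' /\ forall X, (<[b]> * X)%VS = (<[b']> * X)%VS.
Proof.
move=> hs hs' nz_b nz_b' eq_bV.
have eq_hh' : h = h'.
  case: (eqVneq h h') => // /(orbV_neq hs hs').
  by rewrite -(orb_lmulv (V h) nz_b) -(orb_lmulv (V h') nz_b') eq_bV eqxx.
by subst h'; split=> //; apply: full_length_lmulv_eq (V_full_length hs) nz_b nz_b' eq_bV.
Qed.

Lemma lmulv_limg_subV h b U : (<[b]> * (Phi h @: U) <= <[b]> * V h)%VS.
Proof. by apply/prodvSr/limgS/subvf. Qed.

Lemma dim_lmulv_limg h b U : (h < s)%N -> b != 0 -> U \in D ->
  \dim (<[b]> * (Phi h @: U)) = k.
Proof. by move=> hs nz_b UD; rewrite dim_lmulv // (dim_limg_inj (Phi_inj hs)) dim_D. Qed.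

Lemma lmulv_limg_eq h h' b b' U U' : (h < s)%N -> (h' < s)%N -> b != 0 -> b' != 0 ->
  U \in D -> U' \in D ->
  (<[b]> * (Phi h @: U))%VS = (<[b']> * (Phi h' @: U'))%VS ->
  (<[b]> * V h)%VS = (<[b']> * V h')%VS /\ U = U'.
Proof.
move=> hs hs' nz_b nz_b' UD UD' eq_bU.
have eq_bV : (<[b]> * V h)%VS = (<[b']> * V h')%VS.
  apply/eqP; apply: contraTT k_gt1 => /(dim_lmulvV_cap_le1 hs hs' nz_b nz_b').
  rewrite -leqNgt; apply: leq_trans; rewrite -(dim_lmulv_limg hs nz_b UD).
  by apply/dimvS; rewrite subv_cap lmulv_limg_subV eq_bU lmulv_limg_subV.
split=> //; have [eq_hh' eq_lmulv] := lmulvV_eq hs hs' nz_b nz_b' eq_bV; subst h'.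
by move: eq_bU; rewrite eq_lmulv => /(lmulv_inj nz_b')/(limg_inj (Phi_inj hs)).
Qed.

Lemma dim_odot X : X \in odot s Phi D -> \dim X = k.
Proof. by case/odotP => h hs [U UD [b nz_b ->]]; apply: dim_lmulv_limg. Qed.

Lemma min_dist_odot : min_dist (odot s Phi D) (2 * k - 2).
Proof.
split.
  have [U [U' [UD U'D neqUU' distUU']]] := dist_D.1.
  have [W [_ [/orbits_unionP[h hs _] _ _ _]]] := dist_C.1.
  have nz1 : (1 : L) != 0 := oner_neq0 L.
  exists (<[1]> * (Phi h @: U))%VS, (<[1]> * (Phi h @: U'))%VS; split.
  - by apply/odotP; exists h => //; exists U => //; exists 1.
  - by apply/odotP; exists h => //; exists U' => //; exists 1.
  - apply: contraNneq neqUU' => /(lmulv_limg_eq hs hs nz1 nz1 UD U'D)[_ ->].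
    by rewrite eqxx.
  - by rewrite sdist_lmulv // (sdist_limg_inj (Phi_inj hs)).
move=> _ _ /odotP[h hs [U UD [b nz_b ->]]] /odotP[h' hs' [U' U'D [b' nz_b' ->]]] neq.
have [eq_bV|neq_bV] := eqVneq (<[b]> * V h)%VS (<[b']> * V h')%VS.
  have [eq_hh' eq_lmulv] := lmulvV_eq hs hs' nz_b nz_b' eq_bV; subst h'.
  rewrite eq_lmulv sdist_lmulv // (sdist_limg_inj (Phi_inj hs)) dist_D.2 //.
  by apply: contraNneq neq => ->; rewrite eq_lmulv.
rewrite (leq_sdist_cap1 (dim_lmulv_limg hs nz_b UD) (dim_lmulv_limg hs' nz_b' U'D)).
apply: leq_trans (dim_lmulvV_cap_le1 hs hs' nz_b nz_b' neq_bV).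
by apply/dimvS/capvS; apply: lmulv_limg_subV.
Qed.

Lemma card_odot : #|` odot s Phi D| = (#|` orbits_union s V| * #|` D|)%N.
Proof.
rewrite odotE orbits_unionE; apply: card_imfset2_kernel.
move=> [b h] [b' h'] /[!in_orbit_index] /andP[/= nz_b hs] /andP[/= nz_b' hs'] U U' UD U'D.
apply/eqP/andP => [/(lmulv_limg_eq hs hs' nz_b nz_b' UD U'D)[-> ->] //|].
by case=> /eqP/(lmulvV_eq hs hs' nz_b nz_b')[<- ->] /eqP ->.
Qed.

Lemma odot_code :
  [/\ forall X, X \in odot s Phi D -> \dim X = k,
      min_dist (odot s Phi D) (2 * k - 2)
    & #|` odot s Phi D| = (#|` orbits_union s V| * #|` D|)%N].
Proof. by split; [exact: dim_odot | exact: min_dist_odot | exact: card_odot]. Qed.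

End OdotCode.
End Odot.

Section Tower.
Variables (L : nat -> fieldExtType F) (s : nat -> nat).
Variables (Phi : forall i, nat -> 'Hom(L i, L i.+1)) (C1 : {fset {vspace L 1%N}}).

Lemma Dcode_cyclic n : multi_orbit_cyclic C1 -> multi_orbit_cyclic (Dcode s Phi C1 n).
Proof. by case: n => [//|n] _; apply: odot_cyclic. Qed.

Variable k : nat.
Hypothesis k_gt1 : (1 < k)%N.
Hypothesis dim_C1 : forall U, U \in C1 -> \dim U = k.
Hypothesis dist_C1 : min_dist C1 (2 * k - 2).

Lemma Dcode_code n : (forall i, (0 < i <= n)%N -> odot_admissible (s i) (Phi i)) ->
  [/\ forall U, U \in Dcode s Phi C1 n -> \dim U = k,
      min_dist (Dcode s Phi C1 n) (2 * k - 2)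
    & #|` Dcode s Phi C1 n| = (#|` C1| *
         \prod_(1 <= i < n.+1) #|` orbits_union (s i) (fun h => Phi i h @: fullv)%VS|)%N].
Proof.
elim: n => [_ | n IHn adm]; first by rewrite big_geq ?muln1.
have [|dimD distD cardD] := IHn.
  by move=> i /andP[i_gt0 i_le_n]; apply: adm; rewrite i_gt0 ltnW.
have [inj neq fl distC] := adm n.+1 (leqnn n.+1).
have [dimE distE cardE] := odot_code inj neq fl distC k_gt1 dimD distD.
split=> //=; by rewrite cardE cardD [in RHS]big_nat_recr //= mulnC -mulnA.
Qed.

End Tower.
End CyclicSubspaceCodes.

Unset Implicit Arguments.

Theorem theorem2p19 (F : finFieldType) (e m k : nat) (r : nat -> nat)
  (L : nat -> fieldExtType F)
  (s1 : nat) (V1 : nat -> {vspace L 1%N})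
  (s : nat -> nat) (Phi : forall i, nat -> 'Hom(L i, L i.+1)) :
  let N := fun i : nat => (m * \prod_(1 <= j < i) r j)%N in
  (2 <= e)%N -> (1 < m)%N ->
  (forall i, (1 <= i < e)%N -> (1 < r i)%N) ->
  (1 < k <= m)%N ->
  (forall i, (1 <= i <= e)%N -> \dim {: L i} = N i) ->
  (* C_1 : union of pairwise distinct orbits of k-dim subspaces of F_{q^m} *)
  (forall h, (h < s1)%N -> \dim (V1 h) = k) ->
  (forall h h', (h < s1)%N -> (h' < s1)%N -> h != h' -> orb (V1 h) != orb (V1 h')) ->
  (* C_{i+1} for 1 <= i <= e-1 *)
  (forall i h, (1 <= i < e)%N -> (h < s i)%N -> injective (Phi i h)) ->
  (forall i h h', (1 <= i < e)%N -> (h < s i)%N -> (h' < s i)%N -> h != h' ->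
     orb (Phi i h @: fullv)%VS != orb (Phi i h' @: fullv)%VS) ->
  (forall i h, (1 <= i < e)%N -> (h < s i)%N -> full_length (Phi i h @: fullv)%VS) ->
  (* distance hypotheses *)
  min_dist (orbits_union s1 V1) (2 * k - 2) ->
  (forall i, (1 <= i < e)%N ->
     min_dist (orbits_union (s i) (fun h => (Phi i h @: fullv)%VS)) (2 * N i - 2)) ->
  let C := Dcode s Phi (orbits_union s1 V1) e.-1 in
  [/\ (forall U, U \in C -> \dim U = k),
      multi_orbit_cyclic C,
      min_dist C (2 * k - 2)
    & #|` C| = (#|` orbits_union s1 V1| *
         \prod_(1 <= i < e) #|` orbits_union (s i) (fun h => (Phi i h @: fullv)%VS)|)%N].
Proof.
move=> N e_ge2 _ _ /andP[k_gt1 _] dimL dimV1 _ injPhi orbPhi flPhi distC1 distC C.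
have e_eq : e.-1.+1 = e by rewrite prednK // ltnW.
have adm i : (0 < i <= e.-1)%N -> odot_admissible (s i) (Phi i).
  case/andP=> i_gt0 i_le; have i_range : (1 <= i < e)%N by rewrite i_gt0 -e_eq ltnS.
  split=> [h|h h'|h|]; [exact: injPhi | exact: orbPhi | exact: flPhi |].
  rewrite dimL; first exact: distC.
  by case/andP: i_range => -> /ltnW.
have [dimC distC' cardC] := Dcode_code k_gt1 (dim_orbits_union dimV1) distC1 adm.
split=> //; first exact/Dcode_cyclic/orbits_union_cyclic.
by rewrite cardC e_eq.
Qed.
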